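(* Assume $X$ satisfies condition (P). Then for every $w\in W$, $$\sum_{x\in W_c,\ x\le w}\varepsilon_x\,D_{x,w}=\varepsilon_w.$$
   Context: Let $X$ be a Coxeter graph with Coxeter system $(W,S)$, length function $\ell$, Bruhat order $\le$, identity $e$; write $\varepsilon_w=(-1)^{\ell(w)}$ and $\ell(x,w)=\ell(w)-\ell(x)$. An element of $W$ is fully commutative if any two of its reduced expressions are related by a sequence of moves $ss'\leftrightarrow s's$ with $s,s'\in S$ commuting; $W_c$ denotes the set of fully commutative elements, $[x,w]_c=\{y\in W_c:x\le y\le w\}$ and $(x,w)_c=\{y\in W_c:x<y<w\}$. $\mathcal H$ is the Hecke algebra of $W$ over $\mathcal A=\mathbb Z[q^{1/2},q^{-1/2}]$ with basis $\{T_w\}_{w\in W}$ and multiplication $T_wT_s=T_{ws}$ if $\ell(ws)>\ell(w)$, $T_wT_s=qT_{ws}+(q-1)T_w$ if $\ell(ws)<\ell(w)$. $J$ is the two-sided ideal generated by the elements $\sum_{w\in\langle s,s'\rangle}T_w$ for all pairs of non-commuting $s,s'\in S$ such that $ss'$ has finite order; $TL(X)=\mathcal H/J$, $\sigma:\mathcal H\to TL(X)$ the projection, $t_w=\sigma(T_w)$. $\{t_w:w\in W_c\}$ is an $\mathcal A$-basis of $TL(X)$; for $w\in W$ the polynomials $D_{x,w}\in\mathbb Z[q]$ ($x\in W_c$) are defined by $t_w=\sum_{x\in W_c,\,x\le w}D_{x,w}t_x$, with $D_{x,w}=0$ if $x\not\le w$ (so $D_{x,w}=\delta_{x,w}$ when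 $w\in W_c$). Let $\iota$ be the ring involution of $\mathcal H$ with $\iota(q^{1/2})=q^{-1/2}$, $\iota(T_w)=(T_{w^{-1}})^{-1}$; it preserves $J$ and so induces an involution of $TL(X)$. $R_{x,w}$ are the $R$-polynomials, defined by $(T_{w^{-1}})^{-1}=\varepsilon_wq^{-\ell(w)}\sum_{x\le w}\varepsilon_xR_{x,w}T_x$, and $P_{x,w}$ are the Kazhdan–Lusztig polynomials, so that $C'_w=q^{-\ell(w)/2}\sum_{x\le w}P_{x,w}T_x$ is $\iota$-invariant, $P_{w,w}=1$, $\deg P_{x,w}\le(\ell(x,w)-1)/2$ for $x<w$. For $w\in W_c$, the polynomials $a_{y,w}\in\mathbb Z[q]$ ($y\in W_c$) are defined by $\iota(t_w)=(t_{w^{-1}})^{-1}=q^{-\ell(w)}\sum_{y\in W_c,\,y\le w}a_{y,w}t_y$, $a_{y,w}=0$ if $y\not\le w$. Let $p\mapsto\overline p$ be the ring involution of $\mathbb Z[q^{1/2},q^{-1/2}]$ with $q^{1/2}\mapsto q^{-1/2}$. For $w\in W_c$, $\{L_{x,w}\}_{x\in W_c}$ is the unique family in $\mathbb Z[q^{-1/2}]$ with $L_{x,w}=0$ if $x\not\le w$, $L_{w,w}=1$, $L_{x,w}\in q^{-1/2}\mathbb Z[q^{-1/2}]$ if $x<w$, and $L_{x,w}=\sum_{y\in[x,w]_c}q^{(\ell(x)-\ell(y))/2}a_{x,y}\,\overline{L_{y,w}}$; set $c_w=\sum_{x\in W_c,\,x\le w}q^{-\ell(x)/2}L_{x,w}t_x$.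 Condition (P) on $X$: $\sigma(C'_w)=c_w$ for all $w\in W_c$ and $\sigma(C'_w)=0$ for all $w\in W\setminus W_c$. (For finite irreducible or affine $X$, this holds exactly when $X$ has no vertex adjacent to three or more vertices and $X\neq\widetilde F_4$; in particular types $A$, $B$, $F_4$, $H_3$, $H_4$, $I_2(m)$.) *)

From HB Require Import structures.
From mathcomp Require Import all_boot all_order all_algebra.
From mathcomp Require Import generic_quotient fraction.
From Stdlib Require Import ClassicalEpsilon Relations.Relation_Operators.
Set Implicit Arguments. Unset Strict Implicit. Unset Printing Implicit Defensive.
Import Order.TTheory GRing.Theory Num.Theory.

Definition pdec (P : Prop) : bool :=
  if excluded_middle_informative P then true else false.
Lemma pdecP (P : Prop) : reflect P (pdec P).
Proof. by rewrite /pdec; case: excluded_middle_informative => h; constructor. Qed.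

Section Coxeter.
Variables (n : nat) (m : 'I_n -> 'I_n -> nat).
Definition alt (s t : 'I_n) (k : nat) : seq 'I_n :=
  mkseq (fun i => if odd i then t else s) k.
Inductive wstep : seq 'I_n -> seq 'I_n -> Prop :=
| ws_del u u' s : wstep (u ++ [:: s; s] ++ u') (u ++ u')
| ws_braid u u' s t : s != t -> (0 < m s t)%N ->
    wstep (u ++ alt s t (m s t) ++ u') (u ++ alt t s (m s t) ++ u').
Definition wequiv (u v : seq 'I_n) : bool := pdec (clos_refl_sym_trans _ wstep u v).
Lemma wequiv_refl : reflexive wequiv.
Proof. by move=> u; apply/pdecP; apply: rst_refl. Qed.
Lemma wequiv_sym : symmetric wequiv.
Proof. by move=> u v; apply/pdecP/pdecP; apply: rst_sym. Qed.
Lemma wequiv_trans : transitive wequiv.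
Proof. by move=> v u w /pdecP h1 /pdecP h2; apply/pdecP; apply: rst_trans h1 h2. Qed.
Canonical wequiv_equiv := EquivRel wequiv wequiv_refl wequiv_sym wequiv_trans.
Definition W := {eq_quot wequiv}%qT.

Local Open Scope quotient_scope.
Definition wof (u : seq 'I_n) : W := \pi_W u.
Definition wone : W := wof [::].
Definition wgen (s : 'I_n) : W := wof [:: s].
Definition wmul (x y : W) : W := wof (repr x ++ repr y).
Definition winv (x : W) : W := wof (rev (repr x)).

Definition haslen (w : W) (k : nat) : bool := pdec (exists u, wof u = w /\ size u = k).
Lemma haslen_ex w : exists k, haslen w k.
Proof. by exists (size (repr w)); apply/pdecP; exists (repr w); rewrite /wof reprK. Qed.
Definition len (w : W) : nat := ex_minn (haslen_ex w).

Definition redexp (w : W) (u : seq 'I_n) : Prop := wof u = w /\ size u = len w.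
Lemma redexp_ex w : exists u, (wof u == w) && (size u == len w).
Proof.
rewrite /len; case: ex_minnP => k /pdecP [u [Hu Hs]] _.
by exists u; rewrite Hu Hs !eqxx.
Qed.
Definition redword (w : W) : seq 'I_n := xchoose (redexp_ex w).

Definition reflection (t : W) : Prop := exists w s, t = wmul (wmul w (wgen s)) (winv w).
Definition bstep (x y : W) : Prop := exists t, reflection t /\ y = wmul x t /\ (len x < len y)%N.
Definition bruhat (x y : W) : Prop := clos_refl_trans _ bstep x y.
Definition blt (x y : W) : Prop := bruhat x y /\ x <> y.

Inductive cstep : seq 'I_n -> seq 'I_n -> Prop :=
| cs_comm u u' s t : m s t = 2%N -> cstep (u ++ [:: s; t] ++ u') (u ++ [:: t; s] ++ u').
Definition FC (w : W) : Prop :=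
  forall u u', redexp w u -> redexp w u' -> clos_refl_sym_trans _ cstep u u'.
End Coxeter.

Local Open Scope ring_scope.
(* coefficients: A = Z[v, v^-1] (v = q^(1/2)) inside F = Frac(Z[v]) *)
Definition F := {fraction {poly int}}.
Definition v : F := tofrac 'X.
Definition q : F := v ^+ 2.
Definition evalF (p : {poly int}) (x : F) : F := (map_poly (fun c : int => c%:~R) p).[x].
Definition Apred (f : F) : Prop := exists (p : {poly int}) (k : nat), f = evalF p v / v ^+ k.
Definition Zq (f : F) : Prop := exists p : {poly int}, f = evalF p q.
Definition Zvinv (f : F) : Prop := exists p : {poly int}, f = evalF p v^-1.
Definition Zvinv_pos (f : F) : Prop := exists p : {poly int}, f = v^-1 * evalF p v^-1.
(* bar involution: v |-> v^-1 *)
Definition bar (f : F) : F :=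
  let r := frac (repr f) in evalF r.1 v^-1 / evalF r.2 v^-1.

Definition ind (P : Prop) (c : F) : F := if pdec P then c else 0.

Section Hecke.
Variables (n : nat) (m : 'I_n -> 'I_n -> nat).
Local Notation W := (W m).
Local Notation len := (@len n m).
Local Notation bruhat := (@bruhat n m).
Local Notation FC := (@FC n m).

Definition eps (w : W) : F := (-1) ^+ len w.

Definition enumP (P : W -> Prop) : seq W :=
  epsilon (inhabits [::]) (fun s : seq W => uniq s /\ forall y, y \in s <-> P y).
Definition fsum (P : W -> Prop) (f : W -> F) : F := \sum_(y <- enumP P) f y.

(* elements of the Hecke algebra, as coefficient functions on the basis T_w *)
Definition H := W -> F.
Definition finsupp (h : H) : Prop := exists s : seq W, forall y, h y != 0 -> y \in s.
Definition Hel (h : H) : Prop := finsupp h /\ forall y, Apred (h y).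
Definition hsupp (h : H) : seq W := enumP (fun y => h y != 0).
Definition hT (w : W) : H := fun y => if y == w then 1 else 0.
Definition hzero : H := fun _ => 0.
Definition hadd (h h' : H) : H := fun y => h y + h' y.
Definition hsub (h h' : H) : H := fun y => h y - h' y.
Definition hscale (c : F) (h : H) : H := fun y => c * h y.
Definition hsumseq (I : Type) (s : seq I) (f : I -> H) : H := fun y => \sum_(i <- s) f i y.
Definition mulTs_basis (w : W) (s : 'I_n) : H :=
  let ws := wmul w (wgen m s) in
  if (len w < len ws)%N then hT ws else hadd (hscale q (hT ws)) (hscale (q - 1) (hT w)).
Definition mulTs (h : H) (s : 'I_n) : H :=
  hsumseq (hsupp h) (fun y => hscale (h y) (mulTs_basis y s)).
Definition mulTw (h : H) (w : W) : H := foldl mulTs h (redword w).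
Definition hmul (h h' : H) : H := hsumseq (hsupp h') (fun w => hscale (h' w) (mulTw h w)).

(* the involution iota: iota(T_w) = (T_{w^-1})^-1 = T_{s1}^-1 ... T_{sk}^-1 *)
Definition Tinv (s : 'I_n) : H :=
  hadd (hscale q^-1 (hT (wgen m s))) (hscale (q^-1 - 1) (hT (wone m))).
Definition iotaT (w : W) : H := foldl (fun acc s => hmul acc (Tinv s)) (hT (wone m)) (redword w).
Definition hiota (h : H) : H := hsumseq (hsupp h) (fun w => hscale (bar (h w)) (iotaT w)).

(* the ideal J and equality in TL(X) = H / J *)
Definition dihedral (s t : 'I_n) (y : W) : Prop :=
  exists u : seq 'I_n, all (fun i => (i == s) || (i == t)) u /\ wof m u = y.
Definition isgen (g : H) : Prop :=
  exists s t : 'I_n, [/\ s != t, m s t != 2%N, m s t != 0%N &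
    g = fun y => ind (dihedral s t y) 1].
Definition inJ (h : H) : Prop :=
  exists l : seq (H * H * H),
    (forall a g b, List.In (a, g, b) l -> [/\ Hel a, isgen g & Hel b]) /\
    h = hsumseq l (fun x => hmul (hmul x.1.1 x.1.2) x.2).
Definition teq (h h' : H) : Prop := inJ (hsub h h').

Definition Cp (P : W -> W -> F) (w : W) : H := fun x => v ^- len w * P x w.
Definition KLfam (P : W -> W -> F) : Prop :=
  (forall x w, Zq (P x w)) /\
  (forall x w, ~ bruhat x w -> P x w = 0) /\
  (forall w, P w w = 1) /\
  (forall x w, blt x w -> exists p : {poly int},
      P x w = evalF p q /\ (p != 0 -> (2 * (size p).-1 + len x < len w)%N)) /\
  (forall w, hiota (Cp P w) = Cp P w).

Definition afam (a : W -> W -> F) : Prop :=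
  forall w, FC w ->
    (forall y, FC y -> Zq (a y w)) /\
    (forall y, FC y -> ~ bruhat y w -> a y w = 0) /\
    teq (hiota (hT w)) (fun y => v ^- (2 * len w) * ind (FC y /\ bruhat y w) (a y w)).

Definition Lfam (a L : W -> W -> F) : Prop :=
  forall w, FC w -> L w w = 1 /\ forall x, FC x ->
    [/\ Zvinv (L x w), ~ bruhat x w -> L x w = 0, blt x w -> Zvinv_pos (L x w) &
      L x w = fsum (fun y => [/\ FC y, bruhat x y & bruhat y w])
                   (fun y => v ^+ len x / v ^+ len y * a x y * bar (L y w))].

(* c_w, as an element of H whose image in TL(X) is c_w *)
Definition cw (L : W -> W -> F) (w : W) : H :=
  fun x => ind (FC x /\ bruhat x w) (v ^- len x * L x w).

Definition condP : Prop :=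
  forall P a L, KLfam P -> afam a -> Lfam a L ->
    forall w, (FC w -> teq (Cp P w) (cw L w)) /\ (~ FC w -> teq (Cp P w) hzero).

Definition Dexp (D : W -> W -> F) : Prop :=
  forall w, (forall x, FC x -> ~ bruhat x w -> D x w = 0) /\
    teq (hT w) (fun x => ind (FC x /\ bruhat x w) (D x w)).
End Hecke.

Definition coxeter_matrix (n : nat) (m : 'I_n -> 'I_n -> nat) : Prop :=
  forall s t, m s t = m t s /\ (m s t == 1%N) = (s == t).

From Pilot Require Import Defs.
From HB Require Import structures.
From mathcomp Require Import all_boot all_order all_algebra.
From mathcomp Require Import generic_quotient fraction ring.
From Stdlib Require Import ClassicalEpsilon Relations.Relation_Operators FunctionalExtensionality.
Set Implicit Arguments. Unset Strict Implicit. Unset Printing Implicit Defensive.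
Import Order.TTheory GRing.Theory Num.Theory.
Local Open Scope ring_scope.

(* Extend T_w |-> eps_w linearly to the function
     sgn h = \sum_y eps_y h(y)
   on finitely supported coefficient functions h of the Hecke algebra.
   Since eps_(ws) = - eps_w, both cases of the rule for T_w T_s give
   sgn (T_w T_s) = - eps_w (in the second case because
   q (- eps_w) + (q - 1) eps_w = - eps_w), so sgn is multiplicative.  On a
   generator of J, the indicator of a finite dihedral subgroup <s, t>, right
   multiplication by s is a sign-reversing involution, so sgn vanishes there,
   and hence on all of J: sgn factors through TL(X).  Applying it to the
   relation t_w = \sum_x D_(x,w) t_x in TL(X) gives the theorem, once the
   summation range {x in W_c | x <= w} is known to be finite. *)

Section Words.
Variables (n : nat) (m : 'I_n -> 'I_n -> nat).
Local Notation W := (W m).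
Local Notation wrel := (clos_refl_sym_trans _ (wstep m)).

Lemma wofP (u u' : seq 'I_n) : wof m u = wof m u' <-> wrel u u'.
Proof.
have eq_mod := eqquotP (Defs.W m) u u'.
by split=> [/eq_mod /pdecP | /pdecP /eq_mod].
Qed.

Lemma wofK (x : W) : wof m (repr x) = x.
Proof. exact: reprK. Qed.

Lemma odd_size_wrel (u u' : seq 'I_n) : wrel u u' -> odd (size u) = odd (size u').
Proof.
elim=> [{}u {}u' [a b s | a b s t _ _] | // | _ _ _ -> // | _ _ _ _ -> _ -> //].
- by rewrite !size_cat /= !addnS /= negbK.
- by rewrite !size_cat !size_mkseq.
Qed.

Lemma wstep_ctx (a b u u' : seq 'I_n) :
  wstep m u u' -> wstep m (a ++ u ++ b) (a ++ u' ++ b).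
Proof.
case=> [x y s | x y s t hst hm].
- by have := ws_del m (a ++ x) (y ++ b) s; rewrite -!catA.
- by have := ws_braid (a ++ x) (y ++ b) hst hm; rewrite -!catA.
Qed.

Lemma wrel_ctx (a b u u' : seq 'I_n) : wrel u u' -> wrel (a ++ u ++ b) (a ++ u' ++ b).
Proof.
elim=> [x y /(wstep_ctx a b) | x | x y _ | x y z _ h1 _ h2].
- exact: rst_step.
- exact: rst_refl.
- exact: rst_sym.
- exact: rst_trans h1 h2.
Qed.

Lemma wof_cat (a a' b b' : seq 'I_n) : wof m a = wof m a' -> wof m b = wof m b' ->
  wof m (a ++ b) = wof m (a' ++ b').
Proof.
move=> /wofP ha /wofP hb; apply/wofP.
apply: (rst_trans _ _ _ (a' ++ b)).
  by have := wrel_ctx [::] b ha.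
by have := wrel_ctx a' [::] hb; rewrite !cats0.
Qed.

Lemma wmulE (x y : W) (a b : seq 'I_n) :
  wof m a = x -> wof m b = y -> wmul x y = wof m (a ++ b).
Proof. by move=> ha hb; apply: wof_cat; rewrite wofK. Qed.

Lemma redwordP (x : W) : wof m (redword x) = x /\ size (redword x) = len x.
Proof. by case/andP: (xchooseP (redexp_ex x)) => /eqP -> /eqP ->. Qed.

Lemma epsE (x : W) (u : seq 'I_n) : wof m u = x -> eps x = (-1) ^+ size u.
Proof.
move=> hu; have [hred hsize] := redwordP x.
rewrite /eps -hsize -signr_odd -[RHS]signr_odd (@odd_size_wrel (redword x) u) //.
by apply/wofP; rewrite hred hu.
Qed.

Lemma eps_mulgen (x : W) (s : 'I_n) : eps (wmul x (wgen m s)) = - eps x.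
Proof.
rewrite (wmulE (wofK x) (erefl (wgen m s))) (epsE (erefl _)) (epsE (wofK x)).
by rewrite size_cat addn1 exprS mulN1r.
Qed.

Lemma wmul_genK (s : 'I_n) : involutive (fun x : W => wmul x (wgen m s)).
Proof.
move=> x; rewrite (wmulE (wofK x) (erefl (wgen m s))) (wmulE (erefl _) (erefl _)).
rewrite -[RHS]wofK; apply/wofP/rst_step.
by have := ws_del m (repr x) [::] s; rewrite -catA !cats0.
Qed.

End Words.

Section SignCharacter.
Variables (n : nat) (m : 'I_n -> 'I_n -> nat).
Local Notation W := (W m).
Local Notation H := (H m).

Definition covers (s : seq W) (h : H) : Prop := forall y, h y != 0 -> y \in s.
Definition sgn_on (s : seq W) (h : H) : F := \sum_(y <- s) eps y * h y.
Definition sgn (h : H) : F := sgn_on (hsupp h) h.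

Lemma sgn_on_cover (s s' : seq W) (h : H) : uniq s -> uniq s' ->
  covers s h -> covers s' h -> sgn_on s h = sgn_on s' h.
Proof.
move=> us us' cs cs'.
have sgn_on_supp t : sgn_on t h = \sum_(y <- [seq y <- t | h y != 0]) eps y * h y.
  rewrite big_filter /sgn_on [RHS]big_mkcond; apply: eq_bigr => y _.
  by case: eqP => [->|]; rewrite ?mulr0.
rewrite !sgn_on_supp; apply/perm_big/uniq_perm; rewrite ?filter_uniq // => y.
by rewrite !mem_filter; case hy: (h y != 0); rewrite //= (cs y hy) (cs' y hy).
Qed.

Lemma enumP_spec (P : W -> Prop) (s : seq W) : uniq s -> (forall y, y \in s <-> P y) ->
  uniq (Defs.enumP P) /\ forall y, y \in Defs.enumP P <-> P y.
Proof.
move=> us hs.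
by apply: (epsilon_spec (inhabits [::]) (fun s => uniq s /\ forall y, y \in s <-> P y)); exists s.
Qed.

Lemma sgnE (s : seq W) (h : H) : uniq s -> covers s h -> sgn h = sgn_on s h.
Proof.
move=> us cs; have [] := @enumP_spec (fun y => h y != 0) [seq y <- s | h y != 0].
- exact: filter_uniq.
- by move=> y; rewrite mem_filter; split=> [/andP [] | hy] //; rewrite hy cs.
by move=> usupp supp_spec; apply: sgn_on_cover => // y /supp_spec.
Qed.

Lemma finsupp_cover (a b : H) : finsupp a -> finsupp b ->
  exists s, [/\ uniq s, covers s a & covers s b].
Proof.
move=> [sa ca] [sb cb]; exists (undup (sa ++ sb)).
by split=> [|y /ca|y /cb]; rewrite ?undup_uniq // mem_undup mem_cat => ->; rewrite ?orbT.
Qed.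

Lemma covers_hadd (s : seq W) (a b : H) : covers s a -> covers s b -> covers s (hadd a b).
Proof.
by move=> ca cb y; rewrite /hadd; case: (a y =P 0) => [->|/eqP /ca //]; rewrite add0r => /cb.
Qed.

Lemma covers_hsub (s : seq W) (a b : H) : covers s a -> covers s b -> covers s (hsub a b).
Proof.
by move=> ca cb y; rewrite /hsub; case: (a y =P 0) => [->|/eqP /ca //]; rewrite sub0r oppr_eq0 => /cb.
Qed.

Lemma covers_hscale (s : seq W) (c : F) (a : H) : covers s a -> covers s (hscale c a).
Proof. by move=> ca y; rewrite /hscale; case: (a y =P 0) => [->|/eqP /ca //]; rewrite mulr0 eqxx. Qed.

Lemma covers_hT (w : W) : covers [:: w] (hT w).
Proof. by move=> y; rewrite /hT inE; case: (y =P w) => // _; rewrite eqxx. Qed.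

Lemma finsupp_hT (w : W) : finsupp (hT w).
Proof. by exists [:: w]; apply: covers_hT. Qed.

Lemma finsupp_hadd (a b : H) : finsupp a -> finsupp b -> finsupp (hadd a b).
Proof. by move=> fa fb; have [s [_ ca cb]] := finsupp_cover fa fb; exists s; apply: covers_hadd. Qed.

Lemma finsupp_hscale (c : F) (a : H) : finsupp a -> finsupp (hscale c a).
Proof. by case=> s ca; exists s; apply: covers_hscale. Qed.

Lemma hsumseq_cons (I : Type) (i : I) (l : seq I) (f : I -> H) :
  hsumseq (i :: l) f = hadd (f i) (hsumseq l f).
Proof. by apply: functional_extensionality => y; rewrite /hsumseq /hadd big_cons. Qed.

Lemma finsupp_hsumseq (I : Type) (l : seq I) (f : I -> H) :
  (forall i, List.In i l -> finsupp (f i)) -> finsupp (hsumseq l f).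
Proof.
elim: l => [|i l IH] hf; first by exists [::] => y; rewrite /hsumseq big_nil eqxx.
rewrite hsumseq_cons; apply: finsupp_hadd; first by apply: hf; left.
by apply: IH => j hj; apply: hf; right.
Qed.

Lemma sgn_hT (w : W) : sgn (hT w) = eps w.
Proof.
by rewrite (sgnE _ (@covers_hT w)) // /sgn_on big_seq1 /hT eqxx mulr1.
Qed.

Lemma sgn_hadd (a b : H) : finsupp a -> finsupp b -> sgn (hadd a b) = sgn a + sgn b.
Proof.
move=> fa fb; have [s [us ca cb]] := finsupp_cover fa fb.
rewrite (sgnE us (covers_hadd ca cb)) (sgnE us ca) (sgnE us cb) /sgn_on -big_split.
by apply: eq_bigr => y _; rewrite mulrDr.
Qed.

Lemma sgn_hsub (a b : H) : finsupp a -> finsupp b -> sgn (hsub a b) = sgn a - sgn b.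
Proof.
move=> fa fb; have [s [us ca cb]] := finsupp_cover fa fb.
rewrite (sgnE us (covers_hsub ca cb)) (sgnE us ca) (sgnE us cb) /sgn_on -sumrB.
by apply: eq_bigr => y _; rewrite mulrBr.
Qed.

Lemma sgn_hscale (c : F) (a : H) : finsupp a -> sgn (hscale c a) = c * sgn a.
Proof.
move=> fa; have [s [us ca _]] := finsupp_cover fa fa.
rewrite (sgnE us (covers_hscale ca)) (sgnE us ca) /sgn_on mulr_sumr.
by apply: eq_bigr => y _; rewrite /hscale mulrCA.
Qed.

Lemma sgn_hsumseq (I : Type) (l : seq I) (f : I -> H) :
  (forall i, List.In i l -> finsupp (f i)) -> sgn (hsumseq l f) = \sum_(i <- l) sgn (f i).
Proof.
elim: l => [|i l IH] hf.
  rewrite big_nil (@sgnE [::]) ?/sgn_on ?big_nil // => y.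
  by rewrite /hsumseq big_nil eqxx.
have hfl j : List.In j l -> finsupp (f j) by move=> hj; apply: hf; right.
rewrite hsumseq_cons big_cons -(IH hfl); apply: sgn_hadd; first by apply: hf; left.
exact: finsupp_hsumseq.
Qed.

End SignCharacter.

Section SignMultiplicative.
Variables (n : nat) (m : 'I_n -> 'I_n -> nat).
Local Notation W := (W m).
Local Notation H := (H m).

Lemma finsupp_mulTs_basis (w : W) (s : 'I_n) : finsupp (mulTs_basis w s).
Proof.
rewrite /mulTs_basis; case: ifP => _; first exact: finsupp_hT.
by apply: finsupp_hadd; apply/finsupp_hscale/finsupp_hT.
Qed.

(* Both cases of the multiplication rule send T_w T_s to -eps w, since
   eps (ws) = - eps w and q (- eps w) + (q - 1) eps w = - eps w. *)
Lemma sgn_mulTs_basis (w : W) (s : 'I_n) : sgn (mulTs_basis w s) = - eps w.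
Proof.
rewrite /mulTs_basis; case: ifP => _; first by rewrite sgn_hT eps_mulgen.
rewrite sgn_hadd ?sgn_hscale ?sgn_hT ?eps_mulgen; first by ring.
all: by [apply: finsupp_hT | apply/finsupp_hscale/finsupp_hT].
Qed.

Lemma finsupp_mulTs (h : H) (s : 'I_n) : finsupp (mulTs h s).
Proof. by apply: finsupp_hsumseq => y _; apply/finsupp_hscale/finsupp_mulTs_basis. Qed.

Lemma sgn_mulTs (h : H) (s : 'I_n) : sgn (mulTs h s) = - sgn h.
Proof.
rewrite /mulTs sgn_hsumseq => [|y _]; last exact/finsupp_hscale/finsupp_mulTs_basis.
rewrite [sgn h]/sgn /sgn_on -sumrN; apply: eq_bigr => y _.
rewrite sgn_hscale ?sgn_mulTs_basis; last exact: finsupp_mulTs_basis.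
by rewrite mulrN mulrC.
Qed.

Lemma finsupp_foldl_mulTs (h : H) (l : seq 'I_n) :
  finsupp h -> finsupp (foldl (@mulTs n m) h l).
Proof.
elim: l h => [|s l IH] h fh; first exact: fh.
exact: IH (finsupp_mulTs h s).
Qed.

Lemma sgn_foldl_mulTs (h : H) (l : seq 'I_n) :
  sgn (foldl (@mulTs n m) h l) = (-1) ^+ size l * sgn h.
Proof.
elim: l h => [|s l IH] h; first by rewrite expr0 mul1r.
by rewrite [LHS]IH sgn_mulTs exprS mulrN mulN1r mulNr.
Qed.

Lemma finsupp_mulTw (h : H) (w : W) : finsupp h -> finsupp (mulTw h w).
Proof. exact: finsupp_foldl_mulTs. Qed.

Lemma sgn_mulTw (h : H) (w : W) : sgn (mulTw h w) = eps w * sgn h.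
Proof. by rewrite /mulTw sgn_foldl_mulTs (epsE (redwordP w).1). Qed.

Lemma finsupp_hmul (h h' : H) : finsupp h -> finsupp (hmul h h').
Proof. by move=> fh; apply: finsupp_hsumseq => w _; apply/finsupp_hscale/finsupp_mulTw. Qed.

Lemma sgn_hmul (h h' : H) : finsupp h -> sgn (hmul h h') = sgn h * sgn h'.
Proof.
move=> fh; rewrite /hmul sgn_hsumseq => [|w _]; last exact/finsupp_hscale/finsupp_mulTw.
rewrite [sgn h']/sgn /sgn_on mulr_sumr; apply: eq_bigr => w _.
rewrite sgn_hscale ?sgn_mulTw; first by ring.
exact: finsupp_mulTw.
Qed.

End SignMultiplicative.

Section DihedralVanishing.
Variables (n : nat) (m : 'I_n -> 'I_n -> nat).
Hypothesis m_sym : forall s t, m s t = m t s.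
Local Notation W := (W m).
Local Notation H := (H m).

Lemma alt_rcons (a b : 'I_n) (k : nat) :
  alt a b k.+1 = rcons (alt a b k) (if odd k then b else a).
Proof. by rewrite /alt mkseqS. Qed.

Lemma alt_mul_gen (a b c : 'I_n) (k : nat) : a != b -> (0 < m a b)%N ->
  (c == a) || (c == b) -> (k <= m a b)%N ->
  exists2 k', (k' <= m a b)%N & wof m (alt a b k ++ [:: c]) = wof m (alt a b k') \/
                                wof m (alt a b k ++ [:: c]) = wof m (alt b a k').
Proof.
move=> hab hm hc; case: k => [|k] hk.
  by exists 1%N => //; case/orP: hc => /eqP ->; [left | right].
rewrite alt_rcons; set l := if odd k then b else a.
have [->|hcl] := eqVneq c l.
  (* the last two letters cancel *)
  exists k; first exact: ltnW.
  by left; apply/wofP/rst_step; move: (ws_del m (alt a b k) [::] l); rewrite !cats0 -cats1 -catA.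
have hc' : c = if odd k then a else b.
  by move: hcl; rewrite /l; case/orP: hc => /eqP ->; case: (odd k); rewrite ?eqxx.
have [hkm|hkm] := ltnP k.+1 (m a b).
  (* the alternating word gets longer *)
  exists k.+2 => //; left; congr (wof m _).
  by rewrite (alt_rcons a b k.+1) alt_rcons cats1 hc' /l /=; case: (odd k).
(* the word has length m a b: apply the braid relation, then cancel *)
have ekm : k.+1 = m a b by apply/eqP; rewrite eqn_leq hk hkm.
exists k; first by rewrite -ekm ltnW.
right; apply/wofP; apply: (rst_trans _ _ _ (alt b a k.+1 ++ [:: c])).
  by apply: rst_step; rewrite -alt_rcons ekm; apply: (ws_braid [::] [:: c] hab hm).
apply: rst_step; rewrite alt_rcons -hc'.
by move: (ws_del m (alt b a k) [::] c); rewrite !cats0 -cats1 -catA.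
Qed.

(* If m s t is finite, the subgroup <s, t> is finite: every word in s, t
   equals an alternating word of length at most m s t. *)
Lemma dihedral_finite (s t : 'I_n) : s != t -> m s t != 0%N ->
  exists S : seq W, uniq S /\ forall y, y \in S <-> dihedral s t y.
Proof.
move=> hst hm0; have hm : (0 < m s t)%N by rewrite lt0n.
have alt_form u : all (fun i => (i == s) || (i == t)) u -> exists2 k, (k <= m s t)%N &
    wof m u = wof m (alt s t k) \/ wof m u = wof m (alt t s k).
  elim/last_ind: u => [|u c IH]; first by exists 0%N => //; left.
  rewrite all_rcons -cats1 => /andP [hc /IH [k hk [e|e]]].
    have [k' hk' e'] := alt_mul_gen hst hm hc hk.
    by exists k' => //; rewrite (wof_cat e (erefl (wof m [:: c]))).
  rewrite m_sym in hk hm; rewrite orbC in hc; have hts : t != s by rewrite eq_sym.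
  have [k' hk' e'] := alt_mul_gen hts hm hc hk.
  exists k'; first by rewrite m_sym.
  by rewrite (wof_cat e (erefl (wof m [:: c]))); case: e' => ->; [right | left].
set alts := [seq wof m (alt s t k) | k <- iota 0 (m s t).+1] ++
            [seq wof m (alt t s k) | k <- iota 0 (m s t).+1].
exists (undup [seq y <- alts | pdec (dihedral s t y)]); split; first exact: undup_uniq.
move=> y; rewrite mem_undup mem_filter; split=> [/andP [/pdecP] //|hy].
apply/andP; split; first exact/pdecP.
case: hy => u [hu <-]; have [k hk [->|->]] := alt_form u hu; rewrite mem_cat; apply/orP.
  by left; apply: (map_f (fun k => wof m (alt s t k))); rewrite mem_iota.
by right; apply: (map_f (fun k => wof m (alt t s k))); rewrite mem_iota.
Qed.

Lemma two_neq0 : (2%:R : F) != 0.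
Proof.
rewrite -[2%:R](rmorph_nat (@tofrac _)) -(rmorph0 (@tofrac _)) tofrac_eq.
by rewrite -polyC_natr polyC_eq0.
Qed.

(* The sign character kills the generators of J: right multiplication by s
   is a sign-reversing involution of the finite group <s, t>. *)
Lemma sgn_isgen (g : H) : isgen g -> sgn g = 0.
Proof.
move=> [s [t [hst _ hm0 ->]]].
have [S [uS hS]] := dihedral_finite hst hm0.
set gst := fun y => ind (dihedral s t y) 1.
have cS : covers S gst by move=> y; rewrite /gst /ind; case: pdecP => [/hS //|]; rewrite eqxx.
set rs := fun y : W => wmul y (wgen m s).
have rsS y : y \in S -> rs y \in S.
  move/hS => [u [hu <-]]; apply/hS; exists (u ++ [:: s]); split; last by rewrite /rs (wmulE (erefl _) (erefl _)).
  by rewrite all_cat hu /= eqxx.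
have perm_rs : perm_eq S (map rs S).
  apply: uniq_perm => //; first by rewrite (map_inj_uniq (inv_inj (wmul_genK s))).
  move=> y; apply/idP/mapP => [yS|[z /rsS zS ->] //].
  by exists (rs y); [exact: rsS | rewrite /rs wmul_genK].
have sum_eps : sgn_on S gst = \sum_(y <- S) eps y.
  rewrite /sgn_on big_seq [RHS]big_seq; apply: eq_bigr => y /hS hy.
  by rewrite /gst /ind; case: pdecP => // _; rewrite mulr1.
have eps_anti : sgn_on S gst = - sgn_on S gst.
  rewrite {1}sum_eps (perm_big _ perm_rs) big_map sum_eps -sumrN.
  by apply: eq_bigr => y _; apply: eps_mulgen.
have : sgn_on S gst * 2%:R = 0 by rewrite mulr_natr mulr2n {1}eps_anti addNr.
by rewrite (sgnE uS cS) => /eqP; rewrite mulf_eq0 (negbTE two_neq0) orbF => /eqP.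
Qed.

Lemma big1_In (I : Type) (l : seq I) (G : I -> F) :
  (forall i, List.In i l -> G i = 0) -> \sum_(i <- l) G i = 0.
Proof.
elim: l => [|i l IH] hG; first by rewrite big_nil.
by rewrite big_cons hG ?IH ?add0r //; [move=> j hj; apply: hG; right | left].
Qed.

(* Hence, being multiplicative, the sign character vanishes on J and factors
   through TL(X). *)
Lemma sgn_inJ (h : H) : inJ h -> sgn h = 0.
Proof.
move=> [l [hl ->]]; rewrite sgn_hsumseq.
  apply: big1_In => -[[a g] b] /hl [[fa _] gen_g _] /=.
  rewrite sgn_hmul; last exact: finsupp_hmul.
  by rewrite sgn_hmul; [rewrite (sgn_isgen gen_g) mulr0 mul0r | exact: fa].
by move=> -[[a g] b] /hl [[fa _] _ _]; apply/finsupp_hmul/finsupp_hmul.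
Qed.

End DihedralVanishing.

Section FiniteRange.
Variables (n : nat) (m : 'I_n -> 'I_n -> nat).
Local Notation W := (W m).

Lemma bruhat_len (x w : W) : bruhat x w -> (len x <= len w)%N.
Proof.
elim=> // [? ? [t [_ [_ /ltnW]]] //|x1 x2 x3 _ h12 _ h23].
exact: leq_trans h12 h23.
Qed.

Fixpoint words_upto (k : nat) : seq (seq 'I_n) :=
  if k is k'.+1 then [::] :: [seq i :: u | i <- enum 'I_n, u <- words_upto k']
  else [:: [::]].

Lemma words_uptoP (k : nat) (u : seq 'I_n) : (size u <= k)%N -> u \in words_upto k.
Proof.
elim: k u => [|k IH] [|i u] //= hu; rewrite ?inE //.
apply/orP; right; apply: (allpairs_f (fun i u => i :: u)); first by rewrite mem_enum.
exact: IH.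
Qed.

(* A set of elements of bounded length is finite, since each of them is
   represented by a reduced word of bounded length. *)
Lemma len_bounded_finite (P : W -> Prop) (k : nat) : (forall x, P x -> len x <= k)%N ->
  exists S : seq W, uniq S /\ forall x, x \in S <-> P x.
Proof.
move=> hP; exists (undup [seq x <- map (wof m) (words_upto k) | pdec (P x)]).
split=> [|x]; first exact: undup_uniq.
rewrite mem_undup mem_filter; split=> [/andP [/pdecP] //|hx].
apply/andP; split; first exact/pdecP.
have [hred hsize] := redwordP x; rewrite -hred; apply/map_f/words_uptoP.
by rewrite hsize; apply: hP.
Qed.

End FiniteRange.

Theorem mainTheorem7 (n : nat) (m : 'I_n -> 'I_n -> nat) :
  coxeter_matrix m -> condP m ->
  forall D : W m -> W m -> F, Dexp D ->
  forall w : W m,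
    fsum (fun x => FC x /\ bruhat x w) (fun x => eps x * D x w) = eps w.
Proof.
move=> cox _ D hD w; have [_ tw_expansion] := hD w.
have m_sym s t : m s t = m t s by case: (cox s t).
set P := fun x => FC x /\ bruhat x w.
set f : H m := fun x => ind (P x) (D x w).
have [S [uS hS]] := @len_bounded_finite n m P (len w) (fun x hx => bruhat_len (proj2 hx)).
have [uE hE] := enumP_spec (P := P) uS hS.
have cE : covers (Defs.enumP P) f.
  by move=> y; rewrite /f /ind; case: pdecP => [/hE //|]; rewrite eqxx.
(* apply the sign character to the relation t_w = \sum_x D_{x,w} t_x *)
have : sgn (hsub (hT w) f) = 0 := sgn_inJ m_sym tw_expansion.
rewrite sgn_hsub; [|exact: finsupp_hT | by exists (Defs.enumP P)].
rewrite sgn_hT (sgnE uE cE) => /eqP; rewrite subr_eq0 => /eqP ->.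
rewrite /fsum /sgn_on big_seq [RHS]big_seq; apply: eq_bigr => y /hE hy.
by rewrite /f /ind; case: pdecP.
Qed.
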